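(* Let $S\subseteq\mathbb{R}^n\times\mathbb{R}^p$ be sign-invariant with respect to $x$, and let $S_0=S\cap(\mathbb{R}^n_+\times\mathbb{R}^p)$. Then $$\mathrm{conv}(S)=\{(x,z)\mid \exists u\in\mathbb{R}^n:\ (u,z)\in\mathrm{conv}(S_0),\ u\ge|x|\},$$ where $|x|$ is the componentwise absolute value and $u\ge|x|$ is componentwise.
   Context: A set $S\subseteq\mathbb{R}^n\times\mathbb{R}^p$ is sign-invariant with respect to $x$ if $(x,z)\in S$ implies $(\bar x,z)\in S$ for every $\bar x\in\mathbb{R}^n$ with $|\bar x|=|x|$ (componentwise absolute values). *)

From HB Require Import structures.
From mathcomp Require Import all_boot all_order all_algebra.
Set Implicit Arguments. Unset Strict Implicit. Unset Printing Implicit Defensive.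
Import Order.TTheory GRing.Theory Num.Theory.
Local Open Scope ring_scope.

Definition conv (R : realFieldType) (V : lmodType R) (S : V -> Prop) (v : V) : Prop :=
  exists (k : nat) (w : 'I_k -> R) (s : 'I_k -> V),
    (forall i, 0 <= w i) /\ \sum_(i < k) w i = 1 /\ (forall i, S (s i)) /\
    v = \sum_(i < k) w i *: s i.

Definition sign_invariant (R : realFieldType) (n p : nat)
    (S : 'rV[R]_n * 'rV[R]_p -> Prop) : Prop :=
  forall (x xb : 'rV[R]_n) (z : 'rV[R]_p),
    S (x, z) -> (forall i, `|xb 0 i| = `|x 0 i|) -> S (xb, z).

Definition nonneg_part (R : realFieldType) (n p : nat)
    (S : 'rV[R]_n * 'rV[R]_p -> Prop) (y : 'rV[R]_n * 'rV[R]_p) : Prop :=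
  S y /\ forall i, 0 <= y.1 0 i.

From HB Require Import structures.
From mathcomp Require Import all_boot all_order all_algebra.
From mathcomp Require Import ring lra.
Import Order.TTheory GRing.Theory Num.Theory.
Local Open Scope ring_scope.
Set Implicit Arguments. Unset Strict Implicit.

(* Taking componentwise absolute values of the points of a convex combination
   maps S into S_0 and can only increase the absolute value of the combined
   point, which gives the inclusion from left to right.  Conversely, by sign
   invariance conv S contains, together with (y, z), its reflection in any
   coordinate hyperplane x_j = 0; the segment between the two covers every
   value a with |a| <= y_j in coordinate j.  Shrinking one coordinate at a time
   takes (u, z) in conv S_0 to (x, z). *)

Section ConvexHull.
Variables (R : realFieldType) (U V : lmodType R).

Lemma pair_sum k (F : 'I_k -> U * V) :
  \sum_(i < k) F i = (\sum_(i < k) (F i).1, \sum_(i < k) (F i).2).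
Proof. by rewrite -!raddf_sum; case: (\sum_i F i). Qed.

Lemma conv_mono (S T : U -> Prop) u :
  (forall x, S x -> T x) -> conv S u -> conv T u.
Proof.
move=> ST [k [w [s [w0 [w1 [sS ->]]]]]]; exists k, w, s; do !split => //.
by move=> i; apply: ST.
Qed.

Lemma conv_segment (S : U -> Prop) a b l :
  conv S a -> conv S b -> 0 <= l -> l <= 1 -> conv S (l *: a + (1 - l) *: b).
Proof.
move=> [k [w [s [w0 [w1 [sS ->]]]]]] [k' [w' [s' [w0' [w1' [sS' ->]]]]]] l0 l1.
exists (k + k')%N.
exists (fun i => match split i with inl a => l * w a | inr b => (1 - l) * w' b end).
exists (fun i => match split i with inl a => s a | inr b => s' b end).
split; [|split; [|split]].
- by move=> i; case: (split i) => c; apply: mulr_ge0; rewrite ?subr_ge0.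
- rewrite big_split_ord /=.
  under eq_bigr do rewrite (unsplitK (inl _)).
  under [X in _ + X = _]eq_bigr do rewrite (unsplitK (inr _)).
  by rewrite -!mulr_sumr w1 w1' !mulr1 addrC subrK.
- by move=> i; case: (split i).
- rewrite big_split_ord /=.
  under [X in _ = X + _]eq_bigr do rewrite (unsplitK (inl _)).
  under [X in _ = _ + X]eq_bigr do rewrite (unsplitK (inr _)).
  by rewrite !scaler_sumr; congr (_ + _); apply: eq_bigr => i _; rewrite scalerA.
Qed.

Lemma conv_linear_image (f : U -> V) (S : U -> Prop) (T : V -> Prop) u :
  linear f -> (forall x, S x -> T (f x)) -> conv S u -> conv T (f u).
Proof.
move=> lin_f ST [k [w [s [w0 [w1 [sS ->]]]]]].
pose g : {linear U -> V} := HB.pack f (GRing.isLinear.Build R U V *:%R f lin_f).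
exists k, w, (f \o s); do !split => //; first by move=> i; apply: ST.
by rewrite -[f]/(g : U -> V) linear_sum; apply: eq_bigr => i _; apply: linearZ.
Qed.

End ConvexHull.

Definition row_upd (R : pzRingType) n (j : 'I_n) (a : R) (y : 'rV[R]_n) : 'rV[R]_n :=
  \row_i (if i == j then a else y 0 i).

Section SignInvariant.
Variables (R : realFieldType) (n p : nat) (S : 'rV[R]_n * 'rV[R]_p -> Prop).
Hypothesis S_sign_invariant : sign_invariant S.

Lemma conv_abs_nonneg_part x z : conv S (x, z) ->
  exists u, conv (nonneg_part S) (u, z) /\ forall i, `|x 0 i| <= u 0 i.
Proof.
move=> [k [w [s [w0 [w1 [sS]]]]]]; rewrite pair_sum => -[-> ->].
pose abs_s i := (\row_j `|(s i).1 0 j|, (s i).2).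
exists (\sum_(i < k) w i *: (abs_s i).1); split.
  exists k, w, abs_s; split; [done | split; [done | split]]; last first.
    by rewrite pair_sum.
  move=> i; split => [|j]; last by rewrite /= mxE normr_ge0.
  rewrite /abs_s; case: (s i) (sS i) => y1 z1 /= /S_sign_invariant; apply=> j.
  by rewrite mxE normr_id.
move=> j; rewrite !summxE (le_trans (ler_norm_sum _ _ _)) // ler_sum // => i _.
by rewrite !mxE normrM ger0_norm.
Qed.

Lemma conv_row_reflect j y z :
  conv S (y, z) -> conv S (row_upd j (- y 0 j) y, z).
Proof.
pose f (yz : 'rV[R]_n * 'rV[R]_p) := (row_upd j (- yz.1 0 j) yz.1, yz.2).
apply: (conv_linear_image (f := f)) => [c [y1 z1] [y2 z2]|[y1 z1] S_y1].
  by congr pair; apply/rowP => i; rewrite !mxE; case: eqP => _ /=; ring.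
apply: S_sign_invariant S_y1 _ => i; rewrite mxE.
by case: eqP => [->|_]; rewrite ?normrN.
Qed.

Lemma conv_row_upd j a y z :
  conv S (y, z) -> `|a| <= y 0 j -> conv S (row_upd j a y, z).
Proof.
move=> Syz le_a_y.
have [y0|y_neq0] := eqVneq (y 0 j) 0.
  have a0 : a = 0 by apply/normr0_eq0/le_anti; rewrite normr_ge0 -y0 le_a_y.
  suff -> : row_upd j a y = y by [].
  by apply/rowP => i; rewrite mxE; case: eqP => [->|//]; rewrite a0 y0.
have y_gt0 : 0 < y 0 j by rewrite lt_def y_neq0 (le_trans (normr_ge0 a)).
have a_le := ler_norm a.
have a_ge : - a <= `|a| by rewrite -normrN ler_norm.
(* The point of the segment from (y, z) to its reflection whose j-th coordinate is a. *)
set l := (y 0 j + a) / (2 * y 0 j).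
have l_ge0 : 0 <= l by apply: divr_ge0; lra.
have l_le1 : l <= 1 by rewrite ler_pdivrMr; lra.
have := conv_segment Syz (conv_row_reflect j Syz) l_ge0 l_le1.
congr conv; congr pair; last by rewrite -scalerDl addrC subrK scale1r.
apply/rowP => i; rewrite !mxE; case: eqP => [->|_]; last first.
  by rewrite -mulrDl addrC subrK mul1r.
by rewrite /l; field; lra.
Qed.

Lemma conv_row_dominated (x y : 'rV[R]_n) (z : 'rV[R]_p) :
  conv S (y, z) -> (forall i, `|x 0 i| <= y 0 i) -> conv S (x, z).
Proof.
move=> Syz.
suff: forall m (x : 'rV[R]_n), (forall i, `|x 0 i| <= y 0 i) ->
    (forall i : 'I_n, (m <= i)%N -> x 0 i = y 0 i) -> conv S (x, z).
  by move=> /(_ n x) le_x_y /le_x_y; apply => i; rewrite leqNgt ltn_ord.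
elim=> [|m IHm] {}x le_x_y eq_x_y.
  by suff -> : x = y by []; apply/rowP => i; apply: eq_x_y.
have [m_lt_n|n_le_m] := ltnP m n; last first.
  by apply: IHm => // i; rewrite leqNgt (leq_trans (ltn_ord i)).
pose j := Ordinal m_lt_n.
have y_ge0 i : 0 <= y 0 i := le_trans (normr_ge0 _) (le_x_y i).
have Sx' : conv S (row_upd j (y 0 j) x, z).
  apply: IHm => i; rewrite mxE; case: eqP => [->|neq_ij].
  - by rewrite ger0_norm.
  - exact: le_x_y.
  - by [].
  - rewrite leq_eqVlt => /predU1P[eq_mi|]; last exact: eq_x_y.
    by case: neq_ij; apply: val_inj.
have := conv_row_upd (j := j) (a := x 0 j) Sx'.
rewrite {2}/row_upd mxE eqxx => /(_ (le_x_y j)).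
congr conv; congr pair; apply/rowP => i; rewrite !mxE.
by case: eqP => [->|_]; rewrite ?mxE ?eqxx //; case: eqP.
Qed.

End SignInvariant.

Theorem theorem3 (R : realFieldType) (n p : nat)
    (S : 'rV[R]_n * 'rV[R]_p -> Prop) :
  sign_invariant S ->
  forall (x : 'rV[R]_n) (z : 'rV[R]_p),
    conv S (x, z) <->
    exists u : 'rV[R]_n, conv (nonneg_part S) (u, z) /\ (forall i, `|x 0 i| <= u 0 i).
Proof.
move=> S_sign_invariant x z; split; first exact: conv_abs_nonneg_part.
move=> [u [S0uz le_x_u]].
apply: (conv_row_dominated S_sign_invariant _ le_x_u).
by apply: conv_mono S0uz => yz [].
Qed.
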